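(* The point spectrum of $\dot I_{\mathrm{A}_{\frac12\infty}}$ on $\overline H_{\mathrm{A}_{\frac12\infty},\mathbb{C}}$ is empty, and the point spectrum of $\dot I_{\mathrm{D}_{\frac12\infty}}$ on $\overline H_{\mathrm{D}_{\frac12\infty},\mathbb{C}}$ consists of the single eigenvalue $2$, with multiplicity $1$. In particular, for both $W$, $\ker(\dot I_W)\cap\overline H_{W,\mathbb{C}}=\{0\}$.
   Context: Index sets: $C_{W,0}=\{c_0^{(n)}:n\ge1\}$ (type $\mathrm{A}_{\frac12\infty}$) or $\{c_0^{(n)}:n\ge1\}\cup\{c_0^+,c_0^-\}$ (type $\mathrm{D}_{\frac12\infty}$); $C_{W,1}=\{c_1^{(n)}:n\ge1\}$; $C_W=C_{W,0}\sqcup C_{W,1}$. Adjacency: $c_0^{(n)}$ adjacent to $c_1^{(n)}$ and $c_1^{(n+1)}$; in type D, $c_0^\pm$ adjacent to $c_1^{(1)}$; no others. $\overline H_{W,\mathbb{C}}=\ell^2(C_W)$ with orthonormal basis $\{\gamma_c\}$. $\dot I_W$ is the bounded self-adjoint operator with matrix $\langle\dot I_W\gamma_c,\gamma_{c'}\rangle=2$ if $c=c'$, $-1$ if $c,c'$ adjacent, $0$ otherwise. *)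

From HB Require Import structures.
From mathcomp Require Import all_boot all_order all_algebra.
From mathcomp Require Import all_classical all_reals all_analysis.
From mathcomp Require Export complex.
Set Implicit Arguments. Unset Strict Implicit. Unset Printing Implicit Defensive.
Import Order.TTheory GRing.Theory Num.Theory.
Local Open Scope ring_scope.

(* ---------- Index sets ---------------------------------------------------
   Type A_{1/2 infty}:  C_A := bool * nat, where
       (false, n) stands for c_0^{(n+1)}  and  (true, n) stands for c_1^{(n+1)}.
   Type D_{1/2 infty}:  C_D := (bool * nat) + bool, where
       inl (b, n) is as above, inr true = c_0^+, inr false = c_0^-.           *)
Definition CA := (bool * nat)%type.
Definition CD := ((bool * nat) + bool)%type.

Definition adjA (c c' : CA) : bool :=
  match c, c' with
  | (false, k), (true, l) => (l == k) || (l == k.+1)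
  | (true, l), (false, k) => (l == k) || (l == k.+1)
  | _, _ => false
  end.

Definition adjD (c c' : CD) : bool :=
  match c, c' with
  | inl x, inl y => adjA x y
  | inl x, inr _ => x == (true, 0%N)
  | inr _, inl y => y == (true, 0%N)
  | inr _, inr _ => false
  end.

Definition nbrsA (c : CA) : seq CA :=
  match c with
  | (false, k) => [:: (true, k); (true, k.+1)]
  | (true, 0%N) => [:: (false, 0%N)]
  | (true, l.+1) => [:: (false, l.+1); (false, l)]
  end.

Definition nbrsD (c : CD) : seq CD :=
  match c with
  | inl (true, 0%N) => [:: inl (false, 0%N); inr true; inr false]
  | inl x => map inl (nbrsA x)
  | inr _ => [:: inl (true, 0%N)]
  end.

Lemma nbrsA_spec c c' : (c' \in nbrsA c) = adjA c c'.
Proof.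
case: c => [[|] [|l]]; case: c' => [[|] [|k]];
  rewrite /= !inE ?orbF /= ?xpair_eqE /= ?eqSS //.
by rewrite (eq_sym k) (eq_sym k.+1).
Qed.

Lemma nbrsD_spec c c' : (c' \in nbrsD c) = adjD c c'.
Proof.
case: c => [[[|] [|l]]|b]; case: c' => [[[|] [|k]]|b'];
  rewrite /= ?inE ?(mem_map (@inl_inj _ _)) ?nbrsA_spec //=
  ?(inj_eq (@inl_inj _ _)) ?(inj_eq (@inr_inj _ _)) /= ?xpair_eqE /= ?eqSS //.
- by case: b'.
- by rewrite (eq_sym k) (eq_sym k.+1).
Qed.

Definition Idot (R : realType) (T : Type) (nbrs : T -> seq T)
    (v : T -> R[i]) : T -> R[i] :=
  fun c => 2 * v c - \sum_(c' <- nbrs c) v c'.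

Definition sqmod (R : realType) (z : R[i]) : R := (complex.Re z) ^+ 2 + (complex.Im z) ^+ 2.

Definition in_l2 (R : realType) (T : choiceType) (v : T -> R[i]) : Prop :=
  (\esum_(c in [set: T]) (sqmod (v c))%:E < +oo)%E.

Definition is_eigvec (R : realType) (T : choiceType) (nbrs : T -> seq T)
    (lam : R[i]) (v : T -> R[i]) : Prop :=
  in_l2 v /\ (forall c, Idot nbrs v c = lam * v c).

Definition point_spectrum (R : realType) (T : choiceType) (nbrs : T -> seq T)
    : set R[i] :=
  [set lam | exists v : T -> R[i], is_eigvec nbrs lam v /\ exists c, v c != 0].

Definition eigmult_one (R : realType) (T : choiceType) (nbrs : T -> seq T)
    (lam : R[i]) : Prop :=
  exists v0 : T -> R[i], is_eigvec nbrs lam v0 /\ (exists c, v0 c != 0) /\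
    forall v, is_eigvec nbrs lam v -> exists a : R[i], forall c, v c = a * v0 c.

(* Order the vertices of A_{1/2 infty} along its path, starting from the end
   c_1^(1).  An eigenvector v for lambda then restricts to a sequence with
   u_(n+2) = mu u_(n+1) - u_n, where mu = 2 - lambda, and the complex
   (non-hermitian) quadratic form u_n^2 + u_(n+1)^2 - mu u_n u_(n+1) is
   conserved along the path.  Square summability forces consecutive terms to
   become small, so the form vanishes; combined with the boundary condition at
   the end of the path this kills the initial values, hence v = 0.  For
   D_{1/2 infty} the same argument, with the boundary condition at the fork,
   shows that v vanishes on the path and is antisymmetric on the two prongs
   c_0^+, c_0^-; such a vector is an eigenvector exactly for lambda = 2. *)

From HB Require Import structures.
From mathcomp Require Import all_boot all_order all_algebra.
From mathcomp Require Import all_classical all_reals all_analysis.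
From mathcomp Require Import complex.
From mathcomp Require Import ring lra.
Import Order.TTheory GRing.Theory Num.Theory.
Local Open Scope ring_scope.
Local Open Scope classical_set_scope.
Set Implicit Arguments. Unset Strict Implicit.

Section SquaredModulus.
Variable R : realType.
Implicit Types a b : R[i].

Lemma sqmod_ge0 a : 0 <= sqmod a.
Proof. by case: a => a1 a2; rewrite /sqmod /=; nra. Qed.

Lemma sqmod_eq0 a : sqmod a = 0 -> a = 0.
Proof.
case: a => a1 a2; rewrite /sqmod /= => h.
have -> : a1 = 0 by nra.
by have -> : a2 = 0 by nra.
Qed.

Lemma sqmodM a b : sqmod (a * b) = sqmod a * sqmod b.
Proof. by case: a => a1 a2; case: b => b1 b2; rewrite /sqmod /=; ring. Qed.

Lemma sqmodN a : sqmod (- a) = sqmod a.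
Proof. by case: a => a1 a2; rewrite /sqmod /=; ring. Qed.

Lemma sqmod1 : sqmod (1 : R[i]) = 1.
Proof. by rewrite /sqmod /=; ring. Qed.

Lemma sqmodD_le a b : sqmod (a + b) <= 2 * (sqmod a + sqmod b).
Proof.
case: a => a1 a2; case: b => b1 b2; rewrite /sqmod /=.
by have := sqr_ge0 (a1 - b1); have := sqr_ge0 (a2 - b2); nra.
Qed.

End SquaredModulus.

Section ChebyshevRecurrence.
Variable R : realType.
Implicit Types (mu : R[i]) (u : nat -> R[i]).

Definition chebyshev_rec mu u := forall n, u n.+2 = mu * u n.+1 - u n.

Definition chebyshev_form mu (a b : R[i]) := a ^+ 2 + b ^+ 2 - mu * a * b.

Definition small_consecutive u :=
  forall e : R, 0 < e -> exists n, sqmod (u n) + sqmod (u n.+1) < e.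

Lemma sqmod_chebyshev_form_le (mu a b : R[i]) :
  sqmod (chebyshev_form mu a b) <=
  (4 + 2 * sqmod mu) * (sqmod a + sqmod b) ^+ 2.
Proof.
rewrite /chebyshev_form; apply: (le_trans (sqmodD_le _ _)); rewrite sqmodN !sqmodM.
have := sqmodD_le (a ^+ 2) (b ^+ 2); rewrite !expr2 !sqmodM.
set A := sqmod a; set B := sqmod b; set M := sqmod mu => hD.
have A0 : 0 <= A := sqmod_ge0 a; have B0 : 0 <= B := sqmod_ge0 b.
have M0 : 0 <= M := sqmod_ge0 mu.
have AB : 0 <= M * A * B by rewrite mulr_ge0 // mulr_ge0.
have MAB : M * A * B <= M * (A + B) ^+ 2.
  by rewrite -mulrA ler_wpM2l //; nra.
nra.
Qed.

Lemma chebyshev_form_const mu u : chebyshev_rec mu u ->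
  forall n, chebyshev_form mu (u n) (u n.+1) = chebyshev_form mu (u 0%N) (u 1%N).
Proof. by move=> rec; elim=> [//|n <-]; rewrite /chebyshev_form rec; ring. Qed.

Lemma chebyshev_form_eq0 mu u : chebyshev_rec mu u -> small_consecutive u ->
  chebyshev_form mu (u 0%N) (u 1%N) = 0.
Proof.
move=> rec small; apply: sqmod_eq0; apply/eqP; rewrite eq_le sqmod_ge0 andbT.
rewrite leNgt; apply/negP => c_gt0.
set c := sqmod _ in c_gt0; set K := 4 + 2 * sqmod mu.
have K_gt0 : 0 < K by rewrite /K; have := sqmod_ge0 mu; lra.
have Kc_gt0 : 0 < K + c by rewrite addr_gt0.
(* any [e < 1] with [K * e < c] will do *)
have [n small_n] := small (c / (K + c)) (divr_gt0 c_gt0 Kc_gt0).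
have e_lt1 : c / (K + c) < 1 by rewrite ltr_pdivrMr //; lra.
have Ke_ltc : K * (c / (K + c)) < c.
  by rewrite mulrA ltr_pdivrMr //; nra.
have := sqmod_chebyshev_form_le mu (u n) (u n.+1).
rewrite chebyshev_form_const // -/c -/K.
have s_ge0 : 0 <= sqmod (u n) + sqmod (u n.+1).
  by rewrite addr_ge0 // sqmod_ge0.
set s := sqmod (u n) + sqmod (u n.+1) in small_n s_ge0 *.
set e := c / (K + c) in small_n e_lt1 Ke_ltc.
have : K * s ^+ 2 <= K * e by rewrite ler_wpM2l ?ltW //; nra.
lra.
Qed.

Lemma chebyshev_rec_eq0 mu u : chebyshev_rec mu u ->
  u 0%N = 0 -> u 1%N = 0 -> forall n, u n = 0.
Proof.
move=> rec u0 u1.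
suff zero2 n : u n = 0 /\ u n.+1 = 0 by move=> n; case: (zero2 n).
elim: n => [//|n [un un1]]; split=> //.
by rewrite rec un un1 mulr0 subr0.
Qed.

Lemma chebyshev_unimodular_eq0 (eps : R[i]) u :
  eps ^+ 2 = 1 -> sqmod eps = 1 -> chebyshev_rec (2 * eps) u ->
  u 1%N = eps * u 0%N -> small_consecutive u -> u 0%N = 0.
Proof.
move=> eps2 eps_unit rec u1 small.
have geom n : u n.+1 = eps * u n.
  elim: n => [//|n IH]; rewrite rec.
  have -> : u n = eps * u n.+1 by rewrite IH mulrA -expr2 eps2 mul1r.
  by ring.
have sqmod_const n : sqmod (u n) = sqmod (u 0%N).
  by elim: n => [//|n IH]; rewrite geom sqmodM eps_unit mul1r.
apply: sqmod_eq0; apply/eqP; rewrite eq_le sqmod_ge0 andbT.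
rewrite leNgt; apply/negP => c_gt0.
have [n] := small _ c_gt0.
by rewrite !sqmod_const; have := sqmod_ge0 (u 0%N); lra.
Qed.

End ChebyshevRecurrence.

Section SquareSummable.
Variables (R : realType) (T : choiceType).
Implicit Type v : T -> R[i].

Lemma in_l2_partial_sums_bounded v (x : nat -> T) : injective x -> in_l2 v ->
  exists M : R, forall N, \sum_(k < N) sqmod (v (x k)) <= M.
Proof.
move=> x_inj; rewrite /in_l2.
have partial_le N : ((\sum_(k < N) sqmod (v (x k)))%:E <=
    \esum_(c in [set: T]) (sqmod (v c))%:E)%E.
  apply: esum_ge; exists (x @` `I_N).
    by split; [apply: finite_image; exact: finite_II|].
  rewrite fsbig_image; last by move=> a b _ _; exact: x_inj.
  by rewrite -fsbig_ord sumEFin.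
move: (\esum_(c in [set: T]) (sqmod (v c))%:E)%E partial_le.
case=> [r| |] partial_le // _.
  by exists r => N; rewrite -lee_fin.
by have := partial_le 0%N; rewrite big_ord0.
Qed.

Lemma in_l2_small_consecutive v (x : nat -> T) : injective x -> in_l2 v ->
  small_consecutive (v \o x).
Proof.
move=> x_inj /(in_l2_partial_sums_bounded x_inj) [M bounded] e e_gt0.
apply/not_existsP => /= big_pairs.
pose f k := sqmod (v (x k)).
have pair_ge n : e <= f n + f n.+1 by rewrite leNgt; apply/negP; exact: big_pairs.
have sum_ge K : K%:R * e <= \sum_(k < K.*2) f k.
  elim: K => [|K IH]; first by rewrite big_ord0 mul0r.
  rewrite doubleS !big_ord_recr /= -addrA -[K.+1]addn1 natrD mulrDl mul1r.
  exact: lerD.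
have M_ge0 : 0 <= M by have := bounded 0%N; rewrite big_ord0.
set K := (Num.Def.truncn (M / e)).+1.
have := sum_ge K; have := bounded K.*2.
have := truncnS_gt (M / e); rewrite ltr_pdivrMr // -/K.
lra.
Qed.

Lemma in_l2_finite_support v (A : set T) : finite_set A ->
  (forall c, ~ A c -> v c = 0) -> in_l2 v.
Proof.
move=> finA v_out; have sqmodE0 c : (0 <= (sqmod (v c))%:E)%E.
  by rewrite lee_fin sqmod_ge0.
rewrite /in_l2 (esumID A) // [X in (_ + X)%E]esum1 => [|c [_ /v_out ->]]; last first.
  by rewrite /sqmod /=; congr (_%:E); ring.
by rewrite adde0 esum_fset setTI // fsumEFin // ltry.
Qed.

Lemma no_zero_eigenvalue_kernel (nbrs : T -> seq T) :
  ~ point_spectrum nbrs (0 : R[i]) ->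
  forall v, in_l2 v -> (forall c, Idot nbrs v c = 0) -> forall c, v c = 0.
Proof.
move=> not_eig v v_l2 v_ker c; apply/eqP; apply: contra_notT not_eig => v_c.
by exists v; split; [split=> // c'; rewrite mul0r | exists c].
Qed.

End SquareSummable.

Lemma Idot_eigE (R : realType) (T : Type) (nbrs : T -> seq T) (v : T -> R[i])
    (lam : R[i]) c :
  Idot nbrs v c = lam * v c -> \sum_(c' <- nbrs c) v c' = (2 - lam) * v c.
Proof. by rewrite /Idot => eig; rewrite mulrBl -eig; ring. Qed.

(* [pathA] enumerates C_A along the chain c_1^(1), c_0^(1), c_1^(2), c_0^(2), ... *)
Definition pathA (n : nat) : CA := (~~ odd n, n./2).
Definition pathD (n : nat) : CD := inl (pathA n).

Lemma pathA_double k : pathA k.*2 = (true, k).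
Proof. by rewrite /pathA odd_double half_double. Qed.

Lemma pathA_doubleS k : pathA k.*2.+1 = (false, k).
Proof. by rewrite /pathA /= odd_double /= uphalf_double. Qed.

Lemma pathA_inj : injective pathA.
Proof.
move=> m n [odd_mn half_mn].
rewrite -[m]odd_double_half -[n]odd_double_half half_mn.
by move: odd_mn; case: (odd m); case: (odd n).
Qed.

Lemma pathD_inj : injective pathD.
Proof. exact: inj_comp (@inl_inj _ _) pathA_inj. Qed.

Lemma pathA_surj c : exists n, pathA n = c.
Proof.
case: c => b k; exists ((~~ b) + k.*2)%N.
by rewrite /pathA oddD odd_double half_bit_double; case: b.
Qed.

Lemma nat_parity_ind (P : nat -> Prop) :
  (forall k, P k.*2) -> (forall k, P k.*2.+1) -> forall n, P n.
Proof.
move=> P_even P_odd n; rewrite -[n]odd_double_half.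
by case: (odd n); [apply: P_odd | apply: P_even].
Qed.

Section NeighbourSums.
Variable R : realType.

Lemma sum_nbrsA_path0 (w : CA -> R[i]) :
  \sum_(c <- nbrsA (pathA 0)) w c = w (pathA 1).
Proof. by rewrite big_seq1. Qed.

Lemma sum_nbrsA_pathS (w : CA -> R[i]) n :
  \sum_(c <- nbrsA (pathA n.+1)) w c = w (pathA n) + w (pathA n.+2).
Proof.
elim/nat_parity_ind: n => k.
  by rewrite -doubleS pathA_doubleS pathA_double pathA_double big_cons big_seq1.
rewrite -!doubleS pathA_double pathA_doubleS pathA_doubleS.
by rewrite big_cons big_seq1 addrC.
Qed.

Lemma nbrsD_pathS n : nbrsD (pathD n.+1) = map inl (nbrsA (pathA n.+1)).
Proof.
elim/nat_parity_ind: n => k; first by rewrite /pathD pathA_doubleS.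
by rewrite /pathD -doubleS pathA_double.
Qed.

Lemma sum_nbrsD_pathS (w : CD -> R[i]) n :
  \sum_(c <- nbrsD (pathD n.+1)) w c = w (pathD n) + w (pathD n.+2).
Proof. by rewrite nbrsD_pathS big_map (sum_nbrsA_pathS (w \o inl)). Qed.

Lemma sum_nbrsD_path0 (w : CD -> R[i]) :
  \sum_(c <- nbrsD (pathD 0)) w c = w (pathD 1) + (w (inr true) + w (inr false)).
Proof. by rewrite /= !big_cons big_nil addr0. Qed.

Lemma sum_nbrsD_inr (w : CD -> R[i]) b :
  \sum_(c <- nbrsD (inr b)) w c = w (pathD 0).
Proof. by rewrite big_seq1. Qed.

End NeighbourSums.

Section EigenvectorsA.
Variables (R : realType) (lam : R[i]) (v : CA -> R[i]).
Hypotheses (v_l2 : in_l2 v) (v_eig : forall c, Idot nbrsA v c = lam * v c).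

Lemma eigvecA_chebyshev : chebyshev_rec (2 - lam) (v \o pathA).
Proof.
move=> n /=; have := Idot_eigE (v_eig (pathA n.+1)).
by rewrite sum_nbrsA_pathS => <-; ring.
Qed.

Lemma eigvecA_end : v (pathA 1) = (2 - lam) * v (pathA 0).
Proof. by rewrite -sum_nbrsA_path0; exact: Idot_eigE. Qed.

Lemma eigvecA_eq0 c : v c = 0.
Proof.
have form0 := chebyshev_form_eq0 eigvecA_chebyshev
  (in_l2_small_consecutive pathA_inj v_l2).
have v0 : v (pathA 0) = 0.
  apply/eqP; rewrite -sqrf_eq0; apply/eqP.
  by rewrite -form0 /chebyshev_form /= eigvecA_end; ring.
have [n <-] := pathA_surj c.
apply: (chebyshev_rec_eq0 eigvecA_chebyshev) => //=.
by rewrite eigvecA_end v0 mulr0.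
Qed.

End EigenvectorsA.

Definition prong_vec (R : realType) : CD -> R[i] :=
  fun c => match c with inr true => 1 | inr false => -1 | inl _ => 0 end.

Section EigenvectorsD.
Variables (R : realType) (lam : R[i]) (v : CD -> R[i]).
Hypotheses (v_l2 : in_l2 v) (v_eig : forall c, Idot nbrsD v c = lam * v c).
Local Notation mu := (2 - lam).
Local Notation s := (v (inr true) + v (inr false)).

Lemma eigvecD_chebyshev : chebyshev_rec mu (v \o pathD).
Proof.
move=> n /=; have := Idot_eigE (v_eig (pathD n.+1)).
by rewrite sum_nbrsD_pathS => <-; ring.
Qed.

Lemma eigvecD_prong b : mu * v (inr b) = v (pathD 0).
Proof. by rewrite -(sum_nbrsD_inr v b); symmetry; exact: Idot_eigE. Qed.

Lemma eigvecD_fork : v (pathD 1) = mu * v (pathD 0) - s.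
Proof. by rewrite -(Idot_eigE (v_eig (pathD 0))) sum_nbrsD_path0; ring. Qed.

Lemma eigvecD_mu_prongs : mu * s = 2 * v (pathD 0).
Proof. by rewrite mulrDr !eigvecD_prong; ring. Qed.

Lemma eigvecD_prongs_sqr : s ^+ 2 = v (pathD 0) ^+ 2.
Proof.
have form0 := chebyshev_form_eq0 eigvecD_chebyshev
  (in_l2_small_consecutive pathD_inj v_l2).
apply/eqP; rewrite -subr_eq0; apply/eqP.
rewrite -form0 /chebyshev_form /= eigvecD_fork.
rewrite [RHS](_ : _ = s ^+ 2 - v (pathD 0) * (mu * s) + v (pathD 0) ^+ 2).
  by rewrite eigvecD_mu_prongs; ring.
by ring.
Qed.

Lemma eigvecD_signed_prongs_eq0 (eps : R[i]) :
  eps ^+ 2 = 1 -> sqmod eps = 1 -> s = eps * v (pathD 0) -> v (pathD 0) = 0.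
Proof.
move=> eps2 eps_unit s_eps; have [//|u0_neq0] := eqVneq (v (pathD 0)) 0.
have mu_eps : mu = 2 * eps.
  apply: (mulIf u0_neq0); have := congr1 (GRing.mul eps) eigvecD_mu_prongs.
  rewrite s_eps (_ : eps * _ = eps ^+ 2 * (mu * v (pathD 0))); last by ring.
  by rewrite eps2 mul1r => ->; ring.
apply: (@chebyshev_unimodular_eq0 _ eps (v \o pathD)) => //=.
- by rewrite -mu_eps; exact: eigvecD_chebyshev.
- by rewrite eigvecD_fork s_eps mu_eps; ring.
- exact: in_l2_small_consecutive pathD_inj v_l2.
Qed.

Lemma eigvecD_path0 : v (pathD 0) = 0.
Proof.
have /eqP := eigvecD_prongs_sqr; rewrite eqf_sqr => /orP[] /eqP s_u0.
- by apply: (eigvecD_signed_prongs_eq0 (eps := 1)); rewrite ?expr1n ?sqmod1 ?mul1r.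
- apply: (eigvecD_signed_prongs_eq0 (eps := -1)).
  + by rewrite sqrrN expr1n.
  + by rewrite sqmodN sqmod1.
  + by rewrite s_u0 mulN1r.
Qed.

Lemma eigvecD_prongs_sum : s = 0.
Proof. by apply/eqP; rewrite -sqrf_eq0 eigvecD_prongs_sqr eigvecD_path0 expr0n. Qed.

Lemma eigvecD_shape :
  (forall c, v c = v (inr true) * prong_vec R c) /\ mu * v (inr true) = 0.
Proof.
split; last by rewrite eigvecD_prong eigvecD_path0.
have path_eq0 : forall n, v (pathD n) = 0.
  apply: (chebyshev_rec_eq0 eigvecD_chebyshev) => /=.
    exact: eigvecD_path0.
  by rewrite eigvecD_fork eigvecD_path0 eigvecD_prongs_sum mulr0 subr0.
case=> [x|[|]] /=; rewrite ?mulr1.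
- by have [n <-] := pathA_surj x; rewrite mulr0; exact: path_eq0.
- by [].
- by apply/eqP; rewrite mulrN1 -addr_eq0 addrC eigvecD_prongs_sum.
Qed.

End EigenvectorsD.

Lemma prong_vec_eigvec (R : realType) : is_eigvec nbrsD 2 (prong_vec R).
Proof.
split.
  apply: (in_l2_finite_support (A := [set inr true; inr false])).
    exact: finite_set2.
  by case=> [//|[|] prong]; exfalso; apply: prong; [left | right].
rewrite /Idot; case=> [[[|] [|k]]|[|]] /=; rewrite !big_cons ?big_nil /=; ring.
Qed.

Lemma prong_vec_neq0 (R : realType) : exists c, prong_vec R c != 0.
Proof. by exists (inr true); rewrite oner_eq0. Qed.

Lemma point_spectrumA (R : realType) : point_spectrum (R := R) nbrsA = set0.
Proof.
apply/seteqP; split=> // lam [v [[v_l2 v_eig] [c]]].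
by rewrite (eigvecA_eq0 v_l2 v_eig) eqxx.
Qed.

Lemma point_spectrumD (R : realType) : point_spectrum (R := R) nbrsD = [set 2].
Proof.
apply/seteqP; split=> lam; last first.
  by move=> ->; exists (prong_vec R); split; [exact: prong_vec_eigvec | exact: prong_vec_neq0].
move=> [v [[v_l2 v_eig] [c v_c]]] /=.
have [v_shape] := eigvecD_shape v_l2 v_eig.
have /negPf p_neq0 : v (inr true) != 0.
  by apply: contraNneq v_c => p0; rewrite v_shape p0 mul0r.
by move/eqP; rewrite mulf_eq0 p_neq0 orbF subr_eq0 => /eqP.
Qed.

Lemma eigmult_oneD (R : realType) : eigmult_one (R := R) nbrsD 2.
Proof.
exists (prong_vec R); split; first exact: prong_vec_eigvec.
split; first exact: prong_vec_neq0.
move=> v [v_l2 v_eig]; exists (v (inr true)).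
by have [] := eigvecD_shape v_l2 v_eig.
Qed.

Unset Implicit Arguments.

Theorem mainTheorem10 (R : realType) :
  [/\ point_spectrum (R := R) nbrsA = set0,
      point_spectrum (R := R) nbrsD = [set 2],
      eigmult_one (R := R) nbrsD 2,
      (forall v : CA -> R[i], in_l2 v -> (forall c, Idot nbrsA v c = 0) ->
         forall c, v c = 0) &
      (forall v : CD -> R[i], in_l2 v -> (forall c, Idot nbrsD v c = 0) ->
         forall c, v c = 0)].
Proof.
split; [exact: point_spectrumA | exact: point_spectrumD | exact: eigmult_oneD | |].
- by apply: no_zero_eigenvalue_kernel; rewrite point_spectrumA.
- apply: no_zero_eigenvalue_kernel; rewrite point_spectrumD => /eqP.
  by rewrite eq_sym pnatr_eq0.
Qed.
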